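(* Let $G$ be a finite simple graph and let $\alpha=\alpha(G)$ be its independence number. Then the coefficient of $t^{\alpha}$ in the $h$-polynomial $h_G(t)$ of $S/I(G)$ satisfies \[ h_{\alpha}(G)=(-1)^{\alpha}P_G(-1), \] where $P_G(x)$ is the independence polynomial of $G$.
   Context: Let $G$ be a finite simple graph on vertex set $[N]$, $K$ a field, $S=K[x_1,\dots,x_N]$, and $I(G)\subset S$ the edge ideal generated by the monomials $x_ix_j$ with $\{i,j\}\in E(G)$. The independence number $\alpha(G)$ is the maximum size of an independent set of $G$; it equals $\dim S/I(G)$. The Hilbert series of $S/I(G)$ is written uniquely as $h_G(t)/(1-t)^{\alpha(G)}$ with $h_G(t)=h_0+h_1t+\dots+h_st^s\in\mathbb Z[t]$, $h_s\neq 0$; $h_G(t)$ is the $h$-polynomial. Write $h_G(t)=\sum_{i=0}^{\alpha(G)}h_i(G)t^i$ with $h_i(G)=0$ for $i>\deg h_G(t)$. The independence polynomial is $P_G(x)=\sum_{i\ge 0} g_ix^i$, where $g_i$ is the number of independent sets of $G$ of size $i$ (with $g_0=1$). *)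

From mathcomp Require Import all_boot all_order all_algebra.
Set Implicit Arguments. Unset Strict Implicit. Unset Printing Implicit Defensive.
Import GRing.Theory Num.Theory.
Local Open Scope ring_scope.

Definition simple_graph (N : nat) (e : rel 'I_N) : Prop :=
  irreflexive e /\ symmetric e.

Definition independent (N : nat) (e : rel 'I_N) (A : {set 'I_N}) : bool :=
  [forall i in A, forall j in A, ~~ e i j].

Definition indep_number (N : nat) (e : rel 'I_N) : nat :=
  (\max_(A : {set 'I_N} | independent e A) #|A|)%N.

Definition indep_poly (N : nat) (e : rel 'I_N) : {poly int} :=
  \poly_(i < N.+1) (#|[set A : {set 'I_N} | independent e A & #|A| == i]| : nat)%:Z.

(* Monomials of S = K[x_1..x_N] of degree d are exponent vectors m with
   sum m = d (each exponent is < d+1).  Such a monomial lies in the monomial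
   ideal I(G) iff it is divisible by some generator x_i x_j, {i,j} an edge,
   i.e. m i >= 1 and m j >= 1. *)
Definition in_edge_ideal (N d : nat) (e : rel 'I_N) (m : {ffun 'I_N -> 'I_d.+1}) : bool :=
  [exists i, exists j, [&& e i j, (0 < m i)%N & (0 < m j)%N]].

(* Hilbert function of S/I(G): dim_K (S/I(G))_d = number of degree-d
   monomials not in I(G) (I(G) is a monomial ideal, so the standard monomials
   form a K-basis of S/I(G), for any field K). *)
Definition hilbert_fun (N : nat) (e : rel 'I_N) (d : nat) : nat :=
  #|[set m : {ffun 'I_N -> 'I_d.+1} |
      ((\sum_i (m i : nat))%N == d) && ~~ in_edge_ideal e m]|.

(* h is the h-polynomial: Hilb(S/I(G), t) = h(t) / (1-t)^a with a = alpha(G),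
   i.e. coefficientwise, since 1/(1-t)^a = sum_n C(n+a-1, n) t^n,
     H(d) = sum_{i <= d} h_i * C(d-i+a-1, d-i)   for every d.
   (For a = 0 the truncated subtraction gives C(0,0)=1 at n=0 and
    C(n-1,n)=0 for n>0, as required.) *)
Definition is_h_poly (N : nat) (e : rel 'I_N) (h : {poly int}) : Prop :=
  forall d : nat,
    (hilbert_fun e d)%:Z =
    \sum_(i < d.+1) h`_i * ('C(d - i + indep_number e - 1, d - i))%N%:Z.

From mathcomp Require Import all_boot all_order all_algebra.
From mathcomp Require Import zify.
Import GRing.Theory Num.Theory.
Set Implicit Arguments.
Unset Strict Implicit.
Unset Printing Implicit Defensive.
Local Open Scope ring_scope.

(* A standard monomial of S/I(G) is determined by its support, an independent
   set A, and its exponents on A, which are arbitrary positive integers; so the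
   Hilbert series is the sum over independent sets A of (t/(1-t))^|A|, and
   h_G(t) = sum_A t^|A| (1-t)^(alpha-|A|).  Its coefficient of t^alpha is
   sum_A (-1)^(alpha-|A|) = (-1)^alpha P_G(-1).  Since [is_h_poly] only
   constrains coefficients, all series are handled as polynomials modulo
   X^(alpha+1). *)

Section TruncatedSeries.

Variable R : comNzRingType.
Implicit Types (p q r s : {poly R}) (a k n : nat).

Definition eq_modX n p q := forall i, (i < n)%N -> p`_i = q`_i.

Lemma eq_modX_sym n p q : eq_modX n p q -> eq_modX n q p.
Proof. by move=> Epq i /Epq. Qed.

Lemma eq_modX_trans n p q r : eq_modX n p q -> eq_modX n q r -> eq_modX n p r.
Proof. by move=> Epq Eqr i lt_in; rewrite Epq // Eqr. Qed.

Lemma eq_modXM n p q r s :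
  eq_modX n p q -> eq_modX n r s -> eq_modX n (p * r) (q * s).
Proof.
move=> Epq Ers i lt_in; rewrite !coefM; apply: eq_bigr => j _.
have lt_ji := ltn_ord j; rewrite Epq ?Ers //; lia.
Qed.

Lemma eq_modXMl n p q r : eq_modX n q r -> eq_modX n (p * q) (p * r).
Proof. exact: eq_modXM. Qed.

Lemma eq_modXX n p q k : eq_modX n p q -> eq_modX n (p ^+ k) (q ^+ k).
Proof.
by move=> Epq; elim: k => [|k IHk] //; rewrite !exprS; apply: eq_modXM.
Qed.

Lemma coef_1subXM p i :
  ((1 - 'X) * p)`_i = p`_i - (if i == 0%N then 0 else p`_i.-1).
Proof. by rewrite mulrBl mul1r coefB coefXM. Qed.

(* The truncation mod [X^n] of [(1 - X)^-a = \sum_i 'C(i + a - 1, i) X^i];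
   for [a = 0], truncated subtraction makes it the truncation of [1]. *)
Definition binomial_series a n : {poly R} :=
  \poly_(i < n) ('C(i + a - 1, i))%:R.

Lemma binomial_series0 n : eq_modX n (binomial_series 0 n) 1.
Proof.
move=> i lt_in; rewrite coef_poly lt_in coef1 addn0.
by case: i lt_in => [|i] _ //=; rewrite subn1 bin_small.
Qed.

Lemma mul_1subX_binomial_series a n :
  eq_modX n ((1 - 'X) * binomial_series a.+1 n) (binomial_series a n).
Proof.
move=> i lt_in; rewrite coef_1subXM !coef_poly lt_in.
case: i lt_in => [|i] lt_in /=; first by rewrite !bin0 subr0.
by rewrite ltnW // !addnS !subn1 /= addSn binS natrD addrK.
Qed.

Lemma mul_1subXn_binomial_series a n :
  eq_modX n ((1 - 'X) ^+ a * binomial_series a n) 1.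
Proof.
elim: a => [|a IHa]; first by rewrite expr0 mul1r; apply: binomial_series0.
apply: eq_modX_trans IHa; rewrite exprSr -mulrA.
exact/eq_modXMl/mul_1subX_binomial_series.
Qed.

(* [X + X^2 + ... + X^n], the truncation of [X / (1 - X)]. *)
Definition geom_tail n : {poly R} := \poly_(j < n.+1) ((0 < j)%N)%:R.

Lemma geom_tail_eq_modX n a : (n <= a)%N ->
  eq_modX n.+1 (geom_tail n) (geom_tail a).
Proof. by move=> le_na i lt_in; rewrite !coef_poly lt_in (leq_trans lt_in). Qed.

Lemma mul_1subX_geom_tail n : eq_modX n.+1 ((1 - 'X) * geom_tail n) 'X.
Proof.
move=> i lt_in; rewrite coef_1subXM coefX !coef_poly lt_in.
case: i lt_in => [|[|i]] lt_in /=; rewrite ?subr0 //.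
by rewrite (ltnW lt_in) subrr.
Qed.

Lemma coef_1subXn_hi a i : (a < i)%N -> ((1 - 'X) ^+ a : {poly R})`_i = 0.
Proof.
elim: a i => [|a IHa] [|i] //= lt_ai; first by rewrite expr0 coef1.
by rewrite exprS coef_1subXM /= !IHa ?subrr // ltnW.
Qed.

Lemma coef_1subXn a : ((1 - 'X) ^+ a : {poly R})`_a = (-1) ^+ a.
Proof.
elim: a => [|a IHa]; first by rewrite expr0 coef1.
by rewrite exprS coef_1subXM /= IHa coef_1subXn_hi // sub0r exprS mulN1r.
Qed.

(* Modulo [X^(a+1)], [(1 - X)^a (X/(1 - X))^k] is [X^k (1 - X)^(a - k)]. *)
Lemma coef_1subXn_geom_tail a k : (k <= a)%N ->
  ((1 - 'X) ^+ a * geom_tail a ^+ k)`_a = (-1) ^+ (a - k).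
Proof.
move=> le_ka.
have -> : (1 - 'X) ^+ a * geom_tail a ^+ k =
          (1 - 'X) ^+ (a - k) * ((1 - 'X) * geom_tail a) ^+ k.
  by rewrite exprMn mulrA -exprD subnK.
rewrite (eq_modXMl _ (eq_modXX k (mul_1subX_geom_tail (n:=a))) (ltnSn a)).
by rewrite coefMXn ltnNge le_ka coef_1subXn.
Qed.

End TruncatedSeries.

Definition exp_support (T : finType) n (m : {ffun T -> 'I_n}) : {set T} :=
  [set i | (0 < m i)%N].

Lemma in_edge_idealE N d (e : rel 'I_N) (m : {ffun 'I_N -> 'I_d.+1}) :
  in_edge_ideal e m = ~~ independent e (exp_support m).
Proof.
rewrite /independent negb_forall; apply: eq_existsb => i.
rewrite negb_imply negb_forall inE.
apply/existsP/andP => [[j /and3P[eij mi mj]]|[mi /existsP[j]]].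
  by split=> //; apply/existsP; exists j; rewrite inE mj /= negbK.
by rewrite negb_imply negbK inE => /andP[mj eij]; exists j; rewrite eij mi.
Qed.

Section MonomialsWithSupport.

Variables (R : comNzRingType) (T : finType) (n : nat).

(* Expanding the product over [i] of these sums enumerates the exponent
   vectors with support [A]. *)
Lemma sum_exponents_row (A : {set T}) (i : T) :
  \sum_(j < n.+1) (if (i \in A) == (0 < j)%N then 'X^j else 0 : {poly R}) =
  if i \in A then geom_tail R n else 1.
Proof.
case: (i \in A).
  rewrite /geom_tail poly_def; apply: eq_bigr => j _.
  by case: (0 < j)%N; rewrite ?scale1r ?scale0r.
by rewrite big_ord_recl /= expr0 big1 ?addr0.
Qed.

Lemma sum_monomials_support (A : {set T}) :
  \sum_(m : {ffun T -> 'I_n.+1} | exp_support m == A) 'X^(\sum_i (m i : nat))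
  = geom_tail R n ^+ #|A| :> {poly R}.
Proof.
rewrite -prodr_const [RHS]big_mkcond /=; symmetry.
under eq_bigr => i _ do rewrite -sum_exponents_row.
rewrite bigA_distr_bigA /= [RHS]big_mkcond /=; apply: eq_bigr => m _.
have -> : (exp_support m == A) = [forall i, (i \in A) == (0 < m i)%N].
  apply/eqP/forallP => [<- i|sameA]; first by rewrite inE.
  by apply/setP => i; rewrite inE (eqP (sameA i)).
case: forallP => [sameA|/forallP].
  by rewrite -prodrXr; apply: eq_bigr => i _; rewrite sameA.
by rewrite negb_forall => /existsP[i /negbTE mi]; rewrite (bigD1 i) //= mi mul0r.
Qed.

End MonomialsWithSupport.

Section HilbertFunction.

Variables (R : comNzRingType) (N : nat) (e : rel 'I_N).

(* Truncation mod [X^(n+1)] of the Hilbert series of [S/I(G)]: each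
   independent set [A] contributes the monomials with support exactly [A]. *)
Definition indep_series n : {poly R} :=
  \sum_(A | independent e A) geom_tail R n ^+ #|A|.

Lemma coef_indep_series n d : (d <= n)%N ->
  (indep_series n)`_d = (hilbert_fun e d)%:R.
Proof.
move=> le_dn.
have -> : (indep_series n)`_d = (indep_series d)`_d.
  rewrite !coef_sum; apply: eq_bigr => A _.
  by rewrite (eq_modXX _ (geom_tail_eq_modX R le_dn)).
have -> : indep_series d =
    \sum_(m : {ffun 'I_N -> 'I_d.+1} | ~~ in_edge_ideal e m) 'X^(\sum_i (m i : nat)).
  under [RHS]eq_bigl => m do rewrite in_edge_idealE negbK.
  rewrite (partition_big (@exp_support _ d.+1) (independent e)) //.
  apply: eq_bigr => A indepA; rewrite -sum_monomials_support; apply: eq_bigl => m.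
  by case: (exp_support m =P A) => [->|_]; rewrite ?indepA ?andbF.
rewrite coef_sum /hilbert_fun -sum1_card natr_sum.
rewrite big_mkcond [RHS]big_mkcond /=; apply: eq_bigr => m _.
by rewrite inE coefXn eq_sym andbC; case: (~~ _); case: (_ == _).
Qed.

End HilbertFunction.

Section HPolynomial.

Variables (N : nat) (e : rel 'I_N).
Local Notation a := (indep_number e).

Lemma card_le_indep_number (A : {set 'I_N}) : independent e A -> (#|A| <= a)%N.
Proof. exact: leq_bigmax_cond. Qed.

Lemma horner_indep_poly (x : int) :
  (indep_poly e).[x] = \sum_(A | independent e A) x ^+ #|A|.
Proof.
rewrite horner_poly.
rewrite (partition_big (fun A : {set 'I_N} => inord #|A| : 'I_N.+1) xpredT) //.
apply: eq_bigr => i _; rewrite -natz mulr_natl -sumr_const.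
apply: eq_big => [A|A]; last by rewrite inE => /andP[_ /eqP ->].
rewrite inE; case: (independent e A) => //=.
have le_AN : (#|A| <= N)%N by rewrite -[leqRHS](card_ord N) max_card.
by rewrite -(inj_eq val_inj) /= inordK.
Qed.

(* Multiplying the defining identity [H = h / (1 - X)^a] by [(1 - X)^a]. *)
Lemma h_poly_eq_modX (h : {poly int}) : is_h_poly e h ->
  eq_modX a.+1 h ((1 - 'X) ^+ a * indep_series int e a).
Proof.
move=> hh.
have hilbE : eq_modX a.+1 (indep_series int e a) (h * binomial_series int a a.+1).
  move=> d lt_da; rewrite coef_indep_series // natz hh coefM.
  apply: eq_bigr => j _; rewrite coef_poly ifT ?natz //; have := ltn_ord j; lia.
apply: (eq_modX_trans (q := h * ((1 - 'X) ^+ a * binomial_series int a a.+1))).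
  by rewrite -{1}[h]mulr1; apply/eq_modXMl/eq_modX_sym/mul_1subXn_binomial_series.
by rewrite mulrCA; apply/eq_modXMl/eq_modX_sym.
Qed.

Lemma coef_1subXn_indep_series :
  ((1 - 'X) ^+ a * indep_series int e a)`_a = (-1) ^+ a * (indep_poly e).[-1].
Proof.
rewrite mulr_sumr coef_sum horner_indep_poly mulr_sumr.
apply: eq_bigr => A /card_le_indep_number le_Aa.
rewrite coef_1subXn_geom_tail // -{2}(subnK le_Aa) exprD -mulrA -expr2.
by rewrite sqrr_sign mulr1.
Qed.

End HPolynomial.

Theorem proposition1p1 (N : nat) (e : rel 'I_N) (h : {poly int}) :
  simple_graph e -> is_h_poly e h ->
  h`_(indep_number e) = (-1) ^+ (indep_number e) * (indep_poly e).[-1].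
Proof.
move=> _ hh.
by rewrite (h_poly_eq_modX hh) // coef_1subXn_indep_series.
Qed.
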